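(* If $X$ is a closed convex subset of $\mathbb{R}^n$, then $\mathit{HM}_1(X)=0$.
   Context: $X$ carries the Euclidean (subspace) metric. For a metric space $X$, the magnitude homology $\mathit{HM}^\ell_k(X)$ is the degree-$k$ homology of the chain complex whose $k$-chains in grading $\ell$ are the free abelian group on symbols $\langle x_0,\dots,x_k\rangle$ with $x_i\neq x_{i+1}$ and $d(x_0,x_1)+\cdots+d(x_{k-1},x_k)=\ell$, with boundary $\sum_i(-1)^i d^i$, where $d^i$ deletes $x_i$ if $d(x_{i-1},x_i)+d(x_i,x_{i+1})=d(x_{i-1},x_{i+1})$ and is $0$ otherwise (deleting an endpoint always gives $0$); $\mathit{HM}_1(X)=0$ means $\mathit{HM}^\ell_1(X)=0$ for all $\ell$. *)

From HB Require Import structures.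
From mathcomp Require Import all_boot all_order all_algebra.
From mathcomp Require Import all_classical all_reals all_analysis.
Set Implicit Arguments. Unset Strict Implicit. Unset Printing Implicit Defensive.
Import Order.TTheory GRing.Theory Num.Theory.
Import numFieldNormedType.Exports.
Local Open Scope classical_set_scope.
Local Open Scope ring_scope.

(* A "tuple" <x_0,...,x_k> is a seq T of size k+1.  A chain is a formal   *)
(* Z-linear combination of tuples, represented as a finite list of        *)
(* (coefficient, tuple) pairs; two chains are equal in the free abelian   *)
(* group iff their coefficient functions [coef] agree.                    *)

Section Magnitude.
Variables (R : realType) (T : eqType) (d : T -> T -> R) (x0 : T).

Fixpoint tlen (s : seq T) : R :=
  match s with
  | x :: ((y :: _) as s') => d x y + tlen s'
  | _ => 0
  end.

(* generator of C_k^l over the subspace X *)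
Definition adm (X : set T) (k : nat) (l : R) (s : seq T) : Prop :=
  [/\ size s = k.+1, (forall x, x \in s -> X x),
      sorted (fun a b => a != b) s & tlen s = l].

(* d^i is nonzero: i is an interior index and x_i lies "between" *)
Definition face_ok (s : seq T) (i : nat) : bool :=
  (0 < i)%N && (i < (size s).-1)%N &&
  (d (nth x0 s i.-1) (nth x0 s i) + d (nth x0 s i) (nth x0 s i.+1)
     == d (nth x0 s i.-1) (nth x0 s i.+1)).

Definition del (s : seq T) (i : nat) : seq T := take i s ++ drop i.+1 s.

Definition chain := seq (int * seq T).

Definition bd_gen (s : seq T) : chain :=
  [seq ((-1) ^+ i, del s i) | i <- iota 0 (size s) & face_ok s i].

Definition bd (c : chain) : chain :=
  flatten [seq [seq (p.1 * q.1, q.2) | q <- bd_gen p.2] | p <- c].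

Definition coef (c : chain) (t : seq T) : int :=
  \sum_(p <- c | p.2 == t) p.1.

Definition in_C (X : set T) (k : nat) (l : R) (c : chain) : Prop :=
  forall p, p \in c -> adm X k l p.2.

Definition HM_zero (X : set T) (k : nat) (l : R) : Prop :=
  forall c : chain, in_C X k l c -> (forall t, coef (bd c) t = 0) ->
  exists b : chain, in_C X k.+1 l b /\ (forall t, coef (bd b) t = coef c t).

Definition HM_vanishes (X : set T) (k : nat) : Prop :=
  forall l : R, HM_zero X k l.

End Magnitude.

Definition edist (R : realType) (n : nat) (x y : 'rV[R]_n) : R :=
  Num.sqrt (\sum_(i < n) (x ord0 i - y ord0 i) ^+ 2).

Definition convex_subset (R : realType) (n : nat) (X : set 'rV[R]_n) : Prop :=
  forall x y (t : R), X x -> X y -> 0 <= t -> t <= 1 ->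
    X ((1 - t) *: x + t *: y).

Definition HM_euclid (R : realType) (n : nat) (X : set 'rV[R]_n) (k : nat) :=
  HM_vanishes (@edist R n) 0 X k.

(** A generator <x, y> of C_1 has no interior vertex, so every 1-chain is a
    cycle.  If z lies strictly between x and y (d(x,z) + d(z,y) = d(x,y)),
    the only nonzero face of <x, z, y> deletes z, so the boundary of
    -<x, z, y> is <x, y>.  Hence HM_1 vanishes on every Menger convex space,
    and a convex subset of R^n is Menger convex via midpoints. *)

From Pilot Require Import Defs.
From HB Require Import structures.
From mathcomp Require Import all_boot all_order all_algebra.
From mathcomp Require Import all_classical all_reals all_analysis.
From mathcomp Require Import ring lra.
Import numFieldNormedType.Exports.
Import Order.TTheory GRing.Theory Num.Theory.
Local Open Scope classical_set_scope.
Local Open Scope ring_scope.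

Set Implicit Arguments.
Unset Strict Implicit.
Unset Printing Implicit Defensive.

Section MengerConvex.
Variables (R : realType) (T : eqType) (d : T -> T -> R) (x0 : T).

Definition menger_convex (X : set T) : Prop :=
  forall x y, X x -> X y -> x != y ->
  exists2 z, X z & [/\ x != z, z != y & d x z + d z y = d x y].

Lemma bd_cons (p : int * seq T) (c : chain T) :
  bd d x0 (p :: c) = [seq (p.1 * q.1, q.2) | q <- bd_gen d x0 p.2] ++ bd d x0 c.
Proof. by []. Qed.

Lemma bd_gen_between (x z y : T) : d x z + d z y = d x y ->
  bd_gen d x0 [:: x; z; y] = [:: (-1, [:: x; y])].
Proof. by move=> xzy; rewrite /bd_gen /face_ok /= xzy eqxx. Qed.

Section Filling.
Variable m : T -> T -> T.

Definition fill (p : int * seq T) : int * seq T :=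
  (- p.1, [:: nth x0 p.2 0; m (nth x0 p.2 0) (nth x0 p.2 1); nth x0 p.2 1]).

Lemma bd_map_fill (c : chain T) :
  (forall p, p \in c -> exists x y, p.2 = [:: x; y] /\ d x (m x y) + d (m x y) y = d x y) ->
  bd d x0 (map fill c) = c.
Proof.
elim: c => [//|[z s] c IH] c_between /=.
rewrite bd_cons IH => [|p pc]; last by apply: c_between; rewrite inE pc orbT.
have [x [y [/= -> xmy]]] := c_between _ (mem_head _ _).
by rewrite bd_gen_between //= mulrN1 opprK.
Qed.

End Filling.

Lemma menger_convex_choice (X : set T) : menger_convex X ->
  {m : T -> T -> T | forall x y, X x -> X y -> x != y ->
     [/\ X (m x y), x != m x y, m x y != y & d x (m x y) + d (m x y) y = d x y]}.
Proof.
move=> mcX.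
have /choice [m mP] : forall xy : T * T, exists z,
    X xy.1 -> X xy.2 -> xy.1 != xy.2 ->
    [/\ X z, xy.1 != z, z != xy.2 & d xy.1 z + d z xy.2 = d xy.1 xy.2].
  move=> [x y] /=; have [Xx|] := pselect (X x); last by exists x.
  have [Xy|] := pselect (X y); last by exists x.
  have [->|xy] := eqVneq x y; first by exists y.
  by have [z Xz [xz zy xzy]] := mcX x y Xx Xy xy; exists z.
by exists (fun x y => m (x, y)) => x y; apply: (mP (x, y)).
Qed.

Theorem HM1_vanishes_menger_convex (X : set T) :
  menger_convex X -> HM_vanishes d x0 X 1.
Proof.
move=> /menger_convex_choice [m mP] l c cC _.
have c_edge p : p \in c -> exists x y, p.2 = [:: x; y] /\
    [/\ X x, X y, tlen d [:: x; y] = l & x != y].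
  case: p => z s /cC [] /=.
  case: s => [|x [|y [|]]] //= _ inX /andP [xy _] len.
  by exists x, y; split => //; split => //; apply: inX; rewrite !inE eqxx ?orbT.
exists (map (fill m) c); split; last first.
  move=> t; congr coef; apply: bd_map_fill => p /c_edge [x [y [-> [Xx Xy _ xy]]]].
  by exists x, y; have [] := mP x y Xx Xy xy.
move=> q /mapP [p /c_edge [x [y [p2 [Xx Xy len xy]]]] ->]; rewrite /fill p2 /=.
have [Xm xm my xmy] := mP x y Xx Xy xy.
split => //=.
- by move=> w; rewrite !inE => /or3P [] /eqP ->.
- by rewrite xm my.
- by rewrite -len /= !addr0 xmy.
Qed.

End MengerConvex.

Section EuclideanSegments.
Variables (R : realType) (n : nat).
Implicit Types x y : 'rV[R]_n.

Lemma edist_scaled x y x' y' (a : R) : 0 <= a ->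
  (forall i, x ord0 i - y ord0 i = a * (x' ord0 i - y' ord0 i)) ->
  Defs.edist x y = a * Defs.edist x' y'.
Proof.
move=> a_ge0 xy; rewrite /Defs.edist.
have -> : \sum_(i < n) (x ord0 i - y ord0 i) ^+ 2
    = a ^+ 2 * \sum_(i < n) (x' ord0 i - y' ord0 i) ^+ 2.
  by rewrite mulr_sumr; apply: eq_bigr => i _; rewrite xy exprMn.
by rewrite sqrtrM ?sqrtr_sqr ?ger0_norm ?sqr_ge0.
Qed.

Lemma edist_lerp x y (t : R) : 0 <= t <= 1 ->
  Defs.edist x ((1 - t) *: x + t *: y) + Defs.edist ((1 - t) *: x + t *: y) y
  = Defs.edist x y.
Proof.
move=> /andP [t_ge0 t_le1]; set p := (1 - t) *: x + t *: y.
have -> : Defs.edist x p = t * Defs.edist x y.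
  by apply: edist_scaled => // i; rewrite /p !mxE; ring.
have -> : Defs.edist p y = (1 - t) * Defs.edist x y.
  apply: edist_scaled => [|i]; first by rewrite subr_ge0.
  by rewrite /p !mxE; ring.
by rewrite -mulrDl addrC subrK mul1r.
Qed.

Lemma convex_menger_convex (X : set 'rV[R]_n) :
  convex_subset X -> menger_convex (@Defs.edist R n) X.
Proof.
move=> cvxX x y Xx Xy /eqP xy.
have half_ge0 : (0 : R) <= 2^-1 by rewrite invr_ge0.
have half_le1 : (2^-1 : R) <= 1 by rewrite invf_le1 ?ler1n.
exists ((1 - 2^-1) *: x + 2^-1 *: y); first exact: cvxX.
split; last by rewrite edist_lerp ?half_ge0 ?half_le1.
all: apply/eqP => mid_eq; apply: xy; apply/matrixP => i j.
all: move/matrixP: mid_eq => /(_ i j); rewrite !mxE; lra.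
Qed.

End EuclideanSegments.

Theorem corollary7p10 (R : realType) (n : nat) (X : set 'rV[R]_n) :
  closed X -> convex_subset X -> HM_euclid X 1.
Proof.
move=> _ cvxX.
exact/HM1_vanishes_menger_convex/convex_menger_convex.
Qed.
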